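(* Let $n>1$ be an integer, let $m=\prod_{p\mid n,\ p \text{ prime}} p$ be the square-free part (radical) of $n$, and let $0<a_1<a_2<\cdots<a_{\phi(n)}<n$ be the positive integers less than $n$ and coprime with $n$, listed in increasing order. Then $$\sum_{j=1}^{\phi(n)} j\,a_j=\frac{\phi(n)}{24}\left(8n\phi(n)+6n+2\phi(m)(-1)^{\omega(m)}-2^{\omega(m)}\right).$$
   Context: $\phi$ denotes Euler's totient function and $\omega(k)$ denotes the number of distinct prime factors of $k$. *)

From mathcomp Require Import all_boot all_order all_algebra.
Set Implicit Arguments. Unset Strict Implicit. Unset Printing Implicit Defensive.

Definition radical (n : nat) : nat := \prod_(p <- primes n) p.

Definition omega (k : nat) : nat := size (primes k).

(* the positive integers below n coprime with n, in increasing order: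
   a_1 < a_2 < ... < a_phi(n); a_j = nth 0 (coprimes_below n) (j-1) *)
Definition coprimes_below (n : nat) : seq nat :=
  [seq a <- iota 1 n.-1 | coprime a n].

From mathcomp Require Import all_boot all_order all_algebra.
From mathcomp Require Import ring.
Import GRing.Theory Num.Theory.
Local Open Scope ring_scope.

(* Since a_1 < ... < a_phi(n), the sum of (2j - 1) a_j is the sum of max(x, y) over all
   pairs of totatives of n, so the left-hand side is half of that double sum plus the sum
   of the totatives.  Both are evaluated by inclusion-exclusion, sieving out the primes q
   of n one at a time: a sum over the multiples d x < n with x free of the primes sieved so
   far loses the corresponding sum over the multiples of d q.  For the double sum of
   max(d x, e y) the sieve bottoms out at boxes with coprime sides u, v, where
   max(u x, v y) counts the t below c u v that are not above both u x and v y; this leaves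
   sums of floor(t/u) floor(t/v), computed from t = u floor(t/u) + t mod u and the Chinese
   remainder theorem.  Each prime q finally contributes a factor (1 - 1/q)^2,
   -q (1 - 1/q)^2 or 2 (1 - 1/q), which produces the terms in phi(n)^2,
   (-1)^omega(m) phi(m) and 2^omega(m). *)

(** * Elementary sums over ranges *)

Lemma natr_neq0 [k : nat] : (0 < k)%N -> k%:R != 0 :> rat.
Proof. by rewrite pnatr_eq0 -lt0n. Qed.

Lemma sum_nat_blocks (R : nmodType) (a u : nat) (F : nat -> R) :
  \sum_(0 <= t < a * u) F t = \sum_(0 <= i < a) \sum_(0 <= r < u) F (i * u + r)%N.
Proof.
elim: a => [|a IHa]; first by rewrite mul0n !big_geq.
rewrite big_nat_recr //= -IHa mulSn addnC (big_cat_nat _ (n := a * u)) ?leq_addr //=.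
congr (_ + _); rewrite -{1}[(a * u)%N]add0n big_addn addKn.
by apply: eq_bigr => r _; rewrite addnC.
Qed.

Lemma sumr_ltn (R : pzSemiRingType) (z M : nat) : (z <= M)%N ->
  \sum_(0 <= t < M) (t < z)%N%:R = z%:R :> R.
Proof.
move=> zM; rewrite (big_cat_nat _ (n := z)) //=.
rewrite (eq_big_nat _ _ (F2 := fun _ => 1)); last by move=> t /andP[_ ->].
rewrite [X in _ + X](eq_big_nat _ _ (F2 := fun _ => 0)); last first.
  by move=> t /andP[zt _]; rewrite ltnNge zt.
by rewrite big1_eq addr0 sumr_const_nat subn0.
Qed.

Lemma sumr_natr (a : nat) : \sum_(0 <= i < a) i%:R = a%:R * (a%:R - 1) / 2 :> rat.
Proof.
elim: a => [|a IHa]; first by rewrite big_geq // !mul0r.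
by rewrite big_nat_recr //= IHa -addn1 natrD; field.
Qed.

Lemma sumr_natr_sq (a : nat) :
  \sum_(0 <= i < a) i%:R ^+ 2 = a%:R * (a%:R - 1) * (2 * a%:R - 1) / 6 :> rat.
Proof.
elim: a => [|a IHa]; first by rewrite big_geq // !mul0r.
by rewrite big_nat_recr //= IHa -addn1 natrD; field.
Qed.

(* Chinese remainder theorem: [s |-> (s %% u, s %% v)] is a bijection from
   [[0, u * v)] onto [[0, u) * [0, v)]. *)
Lemma sum_modn_coprime (R : comPzSemiRingType) (u v : nat) (f g : nat -> R) :
  coprime u v -> (0 < u)%N -> (0 < v)%N ->
  \sum_(0 <= s < u * v) f (s %% u)%N * g (s %% v)%N =
  (\sum_(0 <= x < u) f x) * (\sum_(0 <= y < v) g y).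
Proof.
move=> co_uv u_gt0 v_gt0; have uv_gt0 : (0 < u * v)%N by rewrite muln_gt0 u_gt0.
rewrite !big_mkord big_distrlr pair_bigA /=.
pose h (p : 'I_u * 'I_v) : 'I_(u * v) :=
  Ordinal (ltn_pmod (chinese u v p.1 p.2) uv_gt0).
pose k (s : 'I_(u * v)) : 'I_u * 'I_v :=
  (Ordinal (ltn_pmod s u_gt0), Ordinal (ltn_pmod s v_gt0)).
have h_modl p : ((h p) %% u = p.1)%N.
  by rewrite /= modn_dvdm ?dvdn_mulr // chinese_modl // modn_small.
have h_modr p : ((h p) %% v = p.2)%N.
  by rewrite /= modn_dvdm ?dvdn_mull // chinese_modr // modn_small.
rewrite (reindex h) /=; last first.
  exists k => [[x y] _ | s _].
    by congr (_, _); apply: val_inj; [exact: (h_modl (x, y)) | exact: (h_modr (x, y))].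
  apply: val_inj => /=.
  by have := chinese_mod co_uv s; rewrite (modn_small (ltn_ord s)).
by apply: eq_bigr => p _; rewrite h_modl h_modr.
Qed.

Lemma sum_divn (a u : nat) : (0 < u)%N ->
  \sum_(0 <= t < a * u) (t %/ u)%:R = u%:R * (a%:R * (a%:R - 1) / 2) :> rat.
Proof.
move=> u_gt0; rewrite sum_nat_blocks -sumr_natr mulr_sumr.
apply: eq_big_nat => i _; rewrite (eq_big_nat _ _ (F2 := fun _ => i%:R)).
  by rewrite sumr_const_nat subn0 mulr_natl.
by move=> r /andP[_ r_lt_u]; rewrite divnMDl // divn_small // addn0.
Qed.

Lemma sum_mul_modn (a u : nat) : (0 < u)%N ->
  \sum_(0 <= t < a * u) t%:R * (t %% u)%:R =
  u%:R * (u%:R * (u%:R - 1) / 2) * (a%:R * (a%:R - 1) / 2)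
  + a%:R * (u%:R * (u%:R - 1) * (2 * u%:R - 1) / 6) :> rat.
Proof.
move=> u_gt0; rewrite sum_nat_blocks.
rewrite (eq_big_nat _ _ (F2 := fun i => i%:R * (u%:R * (u%:R * (u%:R - 1) / 2))
                        + u%:R * (u%:R - 1) * (2 * u%:R - 1) / 6)); last first.
  move=> i _; rewrite -sumr_natr -sumr_natr_sq !mulr_sumr -big_split /=.
  apply: eq_big_nat => r /andP[_ r_lt_u].
  by rewrite modnMDl modn_small // natrD natrM; ring.
by rewrite big_split /= -mulr_suml sumr_natr sumr_const_nat subn0 -mulr_natl; ring.
Qed.

Lemma sum_modn_mul_modn (c u v : nat) : coprime u v -> (0 < u)%N -> (0 < v)%N ->
  \sum_(0 <= t < c * (u * v)) (t %% u)%:R * (t %% v)%:R =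
  c%:R * ((u%:R * (u%:R - 1) / 2) * (v%:R * (v%:R - 1) / 2)) :> rat.
Proof.
move=> co_uv u_gt0 v_gt0; rewrite sum_nat_blocks.
rewrite (eq_big_nat _ _
  (F2 := fun _ => \sum_(0 <= s < u * v) (s %% u)%:R * (s %% v)%:R)); last first.
  by move=> i _; apply: eq_big_nat => r _; rewrite mulnA modnMDl mulnAC modnMDl.
by rewrite sumr_const_nat subn0 sum_modn_coprime // !sumr_natr [RHS]mulr_natl.
Qed.

(** * Sums of maxima over a box *)

Lemma sumr_mul_leq (w K t : nat) : (0 < w)%N -> (t < K * w)%N ->
  \sum_(0 <= x < K) (w * x <= t)%N%:R = (t %/ w)%:R + 1 :> rat.
Proof.
move=> w_gt0 t_lt; rewrite natr1 -(@sumr_ltn _ _ K) ?ltn_divLR //.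
by apply: eq_bigr => x _; rewrite ltnS leq_divRL // mulnC.
Qed.

(* [max(u x, v y) = #|{t < c u v | ~ (u x <= t /\ v y <= t)}|]. *)
Lemma sum_max_box_complement (c u v : nat) : (0 < u)%N -> (0 < v)%N ->
  \sum_(0 <= x < c * v) \sum_(0 <= y < c * u) (maxn (u * x) (v * y))%:R =
  \sum_(0 <= t < c * u * v)
     ((c * v)%:R * (c * u)%:R - ((t %/ u)%:R + 1) * ((t %/ v)%:R + 1)) :> rat.
Proof.
move=> u_gt0 v_gt0; have M_cvu : (c * u * v = c * v * u)%N by rewrite mulnAC.
transitivity (\sum_(0 <= x < c * v) \sum_(0 <= y < c * u)
    \sum_(0 <= t < c * u * v) (t < maxn (u * x) (v * y))%N%:R : rat).
  apply: eq_big_nat => x /andP[_ x_lt]; apply: eq_big_nat => y /andP[_ y_lt].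
  rewrite sumr_ltn // geq_max {1}M_cvu [(u * x)%N]mulnC [(v * y)%N]mulnC.
  by rewrite !leq_pmul2r // (ltnW x_lt) (ltnW y_lt).
rewrite (eq_big_nat _ _ (F2 := fun x => \sum_(0 <= t < c * u * v) \sum_(0 <= y < c * u)
    (t < maxn (u * x) (v * y))%N%:R)); last by move=> x _; rewrite exchange_big.
rewrite exchange_big; apply: eq_big_nat => t /andP[_ t_lt].
transitivity (\sum_(0 <= x < c * v) \sum_(0 <= y < c * u)
    (1 - (u * x <= t)%N%:R * (v * y <= t)%N%:R) : rat).
  apply: eq_bigr => x _; apply: eq_bigr => y _.
  by rewrite ltnNge geq_max; case: (u * x <= t)%N; case: (v * y <= t)%N => /=; ring.
rewrite (eq_big_nat _ _ (F2 := fun x => (c * u)%:R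
    - (u * x <= t)%N%:R * \sum_(0 <= y < c * u) (v * y <= t)%N%:R)); last first.
  by move=> x _; rewrite sumrB sumr_const_nat subn0 mulr_sumr.
rewrite sumrB sumr_const_nat subn0 -mulr_suml !sumr_mul_leq -?M_cvu //.
by rewrite [in RHS]mulr_natl.
Qed.

Lemma sum_max_box (c u v : nat) : coprime u v -> (0 < u)%N -> (0 < v)%N ->
  let M := (c * u * v)%:R in
  \sum_(0 <= x < c * v) \sum_(0 <= y < c * u) (maxn (u * x) (v * y))%:R =
  2 / 3 * M ^+ 3 / (u%:R * v%:R) - 1 / 4 * M ^+ 2 * (u%:R^-1 + v%:R^-1) - M / 4
  + M / 12 * (v%:R / u%:R + u%:R / v%:R - (u%:R * v%:R)^-1) :> rat.
Proof.
move=> co_uv u_gt0 v_gt0 M.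
have u_neq0 := natr_neq0 u_gt0; have v_neq0 := natr_neq0 v_gt0.
have floor_expand t : ((t %/ u)%:R + 1) * ((t %/ v)%:R + 1) =
    (t%:R ^+ 2 - t%:R * (t %% v)%:R - t%:R * (t %% u)%:R + (t %% u)%:R * (t %% v)%:R)
      / (u%:R * v%:R) + (t %/ u)%:R + (t %/ v)%:R + 1 :> rat.
  have divu : (t %/ u)%:R = (t%:R - (t %% u)%:R) / u%:R :> rat.
    by rewrite {2}(divn_eq t u) natrD natrM; field.
  have divv : (t %/ v)%:R = (t%:R - (t %% v)%:R) / v%:R :> rat.
    by rewrite {2}(divn_eq t v) natrD natrM; field.
  by rewrite divu divv; field; rewrite ?u_neq0 ?v_neq0.
rewrite sum_max_box_complement // sumrB sumr_const_nat subn0.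
under eq_bigr => t _ do rewrite floor_expand.
rewrite !big_split /= -mulr_suml !(big_split, sumrB) /= sumr_const_nat subn0.
have M_cvu : (c * u * v = c * v * u)%N by rewrite mulnAC.
have sum_tu := sum_mul_modn (c * v) u u_gt0; rewrite -M_cvu in sum_tu.
have sum_du := sum_divn (c * v) u u_gt0; rewrite -M_cvu in sum_du.
rewrite !sumrN -mulr_natr sumr_natr_sq sum_tu sum_mul_modn // sum_du sum_divn // -mulnA.
rewrite sum_modn_mul_modn // /M !natrM.
by field; rewrite ?u_neq0 ?v_neq0.
Qed.

(** * Sieving out primes *)

Definition avoids (P : seq nat) (x : nat) : bool := all (fun p => ~~ (p %| x)%N) P.

Lemma avoidsM P a b : all prime P -> avoids P (a * b) = avoids P a && avoids P b.
Proof.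
elim: P => [|p P IHP] //= /andP[p_pr P_pr].
rewrite Euclid_dvdM // negb_or IHP //.
by case: (p %| a)%N; case: (p %| b)%N; case: (avoids P a); case: (avoids P b).
Qed.

Lemma avoids_prime [P : seq nat] [q : nat] : all prime P -> prime q -> q \notin P -> avoids P q.
Proof.
elim: P => [|p P IHP] //= /andP[p_pr P_pr] q_pr.
rewrite in_cons negb_or => /andP[q_neq_p qNP].
by rewrite IHP // andbT dvdn_prime2 // eq_sym.
Qed.

Lemma avoids_coprime_prod P x : all prime P -> avoids P x = coprime x (\prod_(p <- P) p).
Proof.
elim: P => [|p P IHP] /=; first by rewrite big_nil coprimen1.
move=> /andP[p_pr P_pr].
by rewrite big_cons coprimeMr IHP // [coprime x p]coprime_sym (prime_coprime x p_pr).
Qed.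

Lemma sum_multiples (R : nmodType) (q c : nat) (Q : pred nat) (F : nat -> R) :
  (0 < q)%N ->
  \sum_(0 <= x < c * q | Q x && (q %| x)%N) F x =
  \sum_(0 <= y < c | Q (q * y)%N) F (q * y)%N.
Proof.
move=> q_gt0; rewrite big_mkcond sum_nat_blocks [RHS]big_mkcond.
apply: eq_bigr => i _; rewrite big_ltn // addn0 mulnC dvdn_mulr // andbT.
rewrite big_nat big1 ?addr0 // => r /andP[r_gt0 r_lt_q].
have -> : (q %| q * i + r)%N = false.
  apply/negbTE; rewrite dvdn_addr ?dvdn_mulr //.
  by apply/negP => /(dvdn_leq r_gt0); rewrite leqNgt r_lt_q.
by rewrite andbF.
Qed.

Definition sieve_sum (N d : nat) (P : seq nat) (F : nat -> rat) : rat :=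
  \sum_(0 <= x < N %/ d | avoids P x) F (d * x)%N.

Lemma eq_sieve_sum N d P (F G : nat -> rat) :
  F =1 G -> sieve_sum N d P F = sieve_sum N d P G.
Proof. by move=> eqFG; apply: eq_bigr => x _; rewrite eqFG. Qed.

Lemma sieve_sumB N d P (F G : nat -> rat) :
  sieve_sum N d P (fun x => F x - G x) = sieve_sum N d P F - sieve_sum N d P G.
Proof. exact: sumrB. Qed.

(* The [x] divisible by [q] are the [q * y]. *)
Lemma sieve_sum_cons N d q P F :
  prime q -> all prime P -> q \notin P -> (0 < d)%N -> (d * q %| N)%N ->
  sieve_sum N d (q :: P) F = sieve_sum N d P F - sieve_sum N (d * q) P F.
Proof.
move=> q_pr P_pr qNP d_gt0 dq_dvd.
have q_dvd : (q %| N %/ d)%N.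
  rewrite dvdn_divRL; first by rewrite mulnC.
  exact: dvdn_trans (dvdn_mulr q (dvdnn d)) dq_dvd.
rewrite /sieve_sum [in RHS](bigID (fun x => q %| x)%N) /= divnMA.
rewrite -{2}(divnK q_dvd) sum_multiples ?prime_gt0 //.
have -> : \sum_(0 <= y < N %/ d %/ q | avoids P (q * y)) F (d * (q * y))%N =
          \sum_(0 <= x < N %/ d %/ q | avoids P x) F (d * q * x)%N.
  by apply: eq_big => [y | y _]; rewrite ?avoidsM ?(avoids_prime P_pr q_pr qNP) ?mulnA.
by rewrite addrAC subrr add0r; apply: eq_bigl => x; rewrite andbC.
Qed.

Definition sieve_summax (N : nat) (P : seq nat) (d e : nat) : rat :=
  sieve_sum N d P (fun a => sieve_sum N e P (fun b => (maxn a b)%:R)).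

Lemma sieve_summax_cons N q P d e :
  prime q -> all prime P -> q \notin P -> (0 < d)%N -> (0 < e)%N ->
  (d * q %| N)%N -> (e * q %| N)%N ->
  sieve_summax N (q :: P) d e =
  sieve_summax N P d e - sieve_summax N P (d * q) e
  - sieve_summax N P d (e * q) + sieve_summax N P (d * q) (e * q).
Proof.
move=> q_pr P_pr qNP d_gt0 e_gt0 dq_dvd eq_dvd; rewrite /sieve_summax.
rewrite (eq_sieve_sum _ _ _ _ _
  (fun a => sieve_sum_cons _ _ _ _ (fun b => (maxn a b)%:R) q_pr P_pr qNP e_gt0 eq_dvd)).
rewrite sieve_sumB !(sieve_sum_cons _ _ _ _ _ q_pr P_pr qNP d_gt0 dq_dvd).
ring.
Qed.

Lemma dvdn_mul3_split [a b c N : nat] :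
  (a * b * c %| N)%N -> (a * b %| N)%N /\ (a * c %| N)%N.
Proof.
move=> dvdN; split; apply: dvdn_trans dvdN; first exact: dvdn_mulr (dvdnn _).
by rewrite mulnAC; exact: dvdn_mulr (dvdnn _).
Qed.

Lemma sieve_sum_oneE N d P : all prime P -> uniq P -> (0 < d)%N ->
  (d * \prod_(p <- P) p %| N)%N ->
  sieve_sum N d P (fun _ => 1) = N%:R / d%:R * \prod_(p <- P) (1 - p%:R^-1).
Proof.
elim: P d => [|q P IHP] d /= P_pr P_uniq d_gt0 dvdN.
  rewrite big_nil muln1 in dvdN.
  by rewrite /sieve_sum big_nil mulr1 sumr_const_nat subn0 natr_div ?unitfE ?natr_neq0.
move: P_pr P_uniq => /andP[q_pr P_pr] /andP[qNP P_uniq].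
have q_gt0 := prime_gt0 q_pr.
rewrite big_cons mulnA in dvdN; have [dq_dvd dP_dvd] := dvdn_mul3_split dvdN.
rewrite sieve_sum_cons // !IHP ?muln_gt0 ?d_gt0 // big_cons natrM.
by field; rewrite !natr_neq0.
Qed.

Lemma sieve_sum_natE N d P : all prime P -> uniq P -> (0 < d)%N ->
  (d * \prod_(p <- P) p %| N)%N ->
  sieve_sum N d P (fun x => x%:R) =
  N%:R ^+ 2 / (2 * d%:R) * \prod_(p <- P) (1 - p%:R^-1) - N%:R / 2 * (P == [::])%:R.
Proof.
elim: P d => [|q P IHP] d /= P_pr P_uniq d_gt0 dvdN.
  rewrite big_nil muln1 in dvdN.
  rewrite /sieve_sum big_nil mulr1.
  under eq_bigr do rewrite natrM.
  rewrite -mulr_sumr sumr_natr natr_div ?unitfE ?natr_neq0 //.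
  by field; rewrite natr_neq0.
move: P_pr P_uniq => /andP[q_pr P_pr] /andP[qNP P_uniq].
have q_gt0 := prime_gt0 q_pr.
rewrite big_cons mulnA in dvdN; have [dq_dvd dP_dvd] := dvdn_mul3_split dvdN.
rewrite sieve_sum_cons // !IHP ?muln_gt0 ?d_gt0 // big_cons natrM.
by field; rewrite !natr_neq0.
Qed.

Lemma sieve_summax_nil N G d e : coprime d e ->
  (0 < G)%N -> (0 < d)%N -> (0 < e)%N -> (G * d * e %| N)%N ->
  sieve_summax N [::] (G * d) (G * e) =
  2 / 3 * N%:R ^+ 3 / (G%:R ^+ 2 * d%:R * e%:R)
  - (N%:R ^+ 2 / (4 * G%:R) * (d%:R^-1 + e%:R^-1) + N%:R / 4)
  + N%:R / 12 * (e%:R / d%:R + d%:R / e%:R) - N%:R / 12 / (d%:R * e%:R).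
Proof.
move=> co_de G_gt0 d_gt0 e_gt0 /dvdnP[c ->].
have divGd : (c * (G * d * e) %/ (G * d) = c * e)%N.
  by rewrite (_ : c * (G * d * e) = c * e * (G * d))%N ?mulnK ?muln_gt0 ?G_gt0 //; ring.
have divGe : (c * (G * d * e) %/ (G * e) = c * d)%N.
  by rewrite (_ : c * (G * d * e) = c * d * (G * e))%N ?mulnK ?muln_gt0 ?G_gt0 //; ring.
rewrite /sieve_summax /sieve_sum divGd divGe.
transitivity (G%:R * \sum_(0 <= x < c * e) \sum_(0 <= y < c * d)
                 (maxn (d * x) (e * y))%:R : rat).
  rewrite mulr_sumr; apply: eq_bigr => x _; rewrite mulr_sumr; apply: eq_bigr => y _.
  by rewrite -!mulnA -maxnMr natrM.
rewrite sum_max_box // !natrM.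
by field; rewrite !natr_neq0.
Qed.

(* The common factor [G] keeps [d] and [e] coprime, as [sum_max_box] needs: a prime
   sieved out of both coordinates moves into [G]. *)
Lemma sieve_summaxE N P G d e : all prime P -> uniq P -> avoids P d -> avoids P e ->
  coprime d e -> (0 < G)%N -> (0 < d)%N -> (0 < e)%N ->
  (G * d * e * \prod_(p <- P) p %| N)%N ->
  sieve_summax N P (G * d) (G * e) =
  2 / 3 * N%:R ^+ 3 / (G%:R ^+ 2 * d%:R * e%:R) * (\prod_(p <- P) (1 - p%:R^-1)) ^+ 2
  - (P == [::])%:R * (N%:R ^+ 2 / (4 * G%:R) * (d%:R^-1 + e%:R^-1) + N%:R / 4)
  + N%:R / 12 * (e%:R / d%:R + d%:R / e%:R) * (-1) ^+ size P
      * (\prod_(p <- P) p)%:R * (\prod_(p <- P) (1 - p%:R^-1)) ^+ 2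
  - N%:R / 12 / (d%:R * e%:R) * 2 ^+ size P * \prod_(p <- P) (1 - p%:R^-1).
Proof.
elim: P G d e => [|q P IHP] G d e.
  move=> _ _ _ _ co_de G_gt0 d_gt0 e_gt0; rewrite big_nil muln1 => dvdN.
  by rewrite sieve_summax_nil // !big_nil /=; field; rewrite !natr_neq0.
move=> /= /andP[q_pr P_pr] /andP[qNP P_uniq] /andP[qNd dP] /andP[qNe eP].
move=> co_de G_gt0 d_gt0 e_gt0; rewrite big_cons => dvdN.
have q_gt0 := prime_gt0 q_pr.
have dq_gt0 : (0 < d * q)%N by rewrite muln_gt0 d_gt0.
have eq_gt0 : (0 < e * q)%N by rewrite muln_gt0 e_gt0.
have Gq_gt0 : (0 < G * q)%N by rewrite muln_gt0 G_gt0.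
have qP_avoid : avoids P q := avoids_prime P_pr q_pr qNP.
have dqP_avoid : avoids P (d * q) by rewrite avoidsM // dP.
have eqP_avoid : avoids P (e * q) by rewrite avoidsM // eP.
have co_dq_e : coprime (d * q) e by rewrite coprimeMl co_de prime_coprime.
have co_d_eq : coprime d (e * q) by rewrite coprimeMr co_de coprime_sym prime_coprime.
pose D := (G * d * e * (q * \prod_(p <- P) p))%N.
have dvd_of k l : (k * l = D)%N -> (k %| N)%N.
  by move=> klD; apply: dvdn_trans dvdN; rewrite -/D -klD; exact: dvdn_mulr (dvdnn k).
rewrite sieve_summax_cons ?muln_gt0 ?G_gt0 ?d_gt0 ?e_gt0 //; first last.
- by apply: (dvd_of _ (d * \prod_(p <- P) p)); rewrite /D; ring.
- by apply: (dvd_of _ (e * \prod_(p <- P) p)); rewrite /D; ring.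
rewrite [(G * d * q)%N in X in _ + X]mulnAC [(G * e * q)%N in X in _ + X]mulnAC.
rewrite -[(G * d * q)%N]mulnA -[(G * e * q)%N]mulnA.
have dvd_full k : (k = D)%N -> (k %| N)%N by move=> kD; apply: (dvd_of k 1); rewrite muln1.
rewrite (IHP G d e) //; last by apply: (dvd_of _ q); rewrite /D; ring.
rewrite (IHP G (d * q) e) //; last by apply: dvd_full; rewrite /D; ring.
rewrite (IHP G d (e * q)) //; last by apply: dvd_full; rewrite /D; ring.
rewrite (IHP (G * q) d e) //; last by apply: dvd_full; rewrite /D; ring.
rewrite !big_cons !exprS natrM !natrM.
by field; rewrite !natr_neq0.
Qed.

(** * Totatives *)

Lemma maxn_nth_sorted (s : seq nat) i j : sorted ltn s ->
  (i < size s)%N -> (j < size s)%N ->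
  maxn (nth 0 s i) (nth 0 s j) = nth 0 s (maxn i j).
Proof.
move=> s_lt i_lt j_lt; have s_le : sorted leq s by apply: sub_sorted s_lt => a b /ltnW.
have nth_mono := sorted_leq_nth leq_trans leqnn 0 s_le.
case: (leqP i j) => [ij | ji].
  by rewrite (maxn_idPr (nth_mono _ _ i_lt j_lt ij)).
by rewrite (maxn_idPl (nth_mono _ _ j_lt i_lt (ltnW ji))).
Qed.

Lemma sum_maxn_square (R : comNzRingType) (L : nat) (F : nat -> R) :
  \sum_(0 <= i < L) \sum_(0 <= j < L) F (maxn i j) =
  \sum_(0 <= i < L) (2 * i%:R + 1) * F i.
Proof.
elim: L => [|L IHL]; first by rewrite !big_geq.
rewrite !big_nat_recr //= -IHL maxnn.
rewrite (eq_big_nat _ _ (F2 := fun i => \sum_(0 <= j < L) F (maxn i j) + F L)); last first.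
  by move=> i /andP[_ iL]; rewrite big_nat_recr //= (maxn_idPr (ltnW iL)).
rewrite big_split /= (eq_big_nat _ _ (F1 := fun j => F (maxn L j)) (F2 := fun _ => F L)).
  by rewrite !sumr_const_nat subn0 -mulr_natl; ring.
by move=> j /andP[_ jL]; rewrite (maxn_idPl (ltnW jL)).
Qed.

(* For increasing [a_1 < ... < a_k], [(2 j - 1) a_j] is the sum of [max(a_i, a_j')]
   over the pairs with [max(i, j') = j]. *)
Lemma sum_rank_mul_sorted (s : seq nat) : sorted ltn s ->
  ((\sum_(1 <= j < (size s).+1) j * nth 0 s j.-1)%N)%:R =
  (\sum_(x <- s) \sum_(y <- s) (maxn x y)%:R + \sum_(x <- s) x%:R) / 2 :> rat.
Proof.
move=> s_lt; rewrite natr_sum big_add1 /=.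
have -> : \sum_(x <- s) \sum_(y <- s) (maxn x y)%:R =
          \sum_(0 <= i < size s) (2 * i%:R + 1) * (nth 0 s i)%:R :> rat.
  rewrite -(sum_maxn_square _ _ (fun i => (nth 0 s i)%:R)) (big_nth 0).
  apply: eq_big_nat => i /andP[_ i_lt]; rewrite (big_nth 0).
  by apply: eq_big_nat => j /andP[_ j_lt]; rewrite maxn_nth_sorted.
rewrite [X in _ + X](big_nth 0) -big_split mulr_suml.
by apply: eq_bigr => i _ /=; rewrite natrM -natr1; field.
Qed.

Lemma coprimen0_gt1 n : (1 < n)%N -> coprime n 0 = false.
Proof. by move=> n_gt1; rewrite /coprime gcdn0; apply/eqP => n1; rewrite n1 in n_gt1. Qed.

Lemma avoids_primes n x : (1 < n)%N -> avoids (primes n) x = coprime x n.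
Proof.
move=> n_gt1; have n_gt0 := ltnW n_gt1.
case: (posnP x) => [->|x_gt0].
  rewrite coprime_sym coprimen0_gt1 //.
  have : primes n != [::] by rewrite primes_eq0 -leqNgt.
  by case: (primes n) => [|p ps] //= _; rewrite dvdn0.
rewrite coprime_has_primes // /avoids -all_predC; apply: eq_in_all => p.
by rewrite mem_primes => /and3P[p_pr _ _] /=; rewrite mem_primes p_pr x_gt0.
Qed.

Lemma dvdn_prod_primes P p : all prime P -> prime p ->
  (p %| \prod_(q <- P) q)%N = (p \in P).
Proof.
elim: P => [|q P IHP] /=; first by move=> _ p_pr; rewrite big_nil Euclid_dvd1.
move=> /andP[q_pr P_pr] p_pr.
by rewrite big_cons Euclid_dvdM // IHP // in_cons dvdn_prime2.
Qed.

Lemma prod_primes_dvdn P n : all prime P -> uniq P -> all (dvdn^~ n) P ->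
  (\prod_(p <- P) p %| n)%N.
Proof.
elim: P => [|p P IHP] /=; first by rewrite big_nil dvd1n.
move=> /andP[p_pr P_pr] /andP[pNP P_uniq] /andP[p_dvd P_dvd].
rewrite big_cons Gauss_dvd; first by rewrite p_dvd IHP.
by rewrite -avoids_coprime_prod // avoids_prime.
Qed.

Lemma radical_dvdn n : (radical n %| n)%N.
Proof.
apply: prod_primes_dvdn; [exact: all_prime_primes | exact: primes_uniq |].
by apply/allP => p; rewrite mem_primes => /and3P[].
Qed.

Lemma primes_radical n : (0 < n)%N -> primes (radical n) = primes n.
Proof.
move=> n_gt0; have rad_gt0 : (0 < radical n)%N.
  rewrite /radical big_seq; apply: prodn_cond_gt0 => p.
  by move/(allP (all_prime_primes n)); exact: prime_gt0.
apply/eq_primes => p; rewrite !mem_primes rad_gt0 n_gt0 /radical.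
case p_pr: (prime p) => //=.
by rewrite dvdn_prod_primes ?all_prime_primes ?p_pr // mem_primes p_pr n_gt0.
Qed.

Lemma radical_gt1 n : (1 < n)%N -> (1 < radical n)%N.
Proof.
move=> n_gt1; have := primes_eq0 (radical n).
rewrite (primes_radical _ (ltnW n_gt1)) primes_eq0 => eq_lt2.
by rewrite ltnNge -ltnS -eq_lt2 -leqNgt.
Qed.

Lemma omega_radical n : (0 < n)%N -> omega (radical n) = omega n.
Proof. by move=> n_gt0; rewrite /omega primes_radical. Qed.

Lemma coprimes_below_sorted n : sorted ltn (coprimes_below n).
Proof. by apply: sorted_filter; [exact: ltn_trans | exact: iota_ltn_sorted]. Qed.

Lemma size_coprimes_below n : (1 < n)%N -> size (coprimes_below n) = totient n.
Proof.
move=> n_gt1; rewrite totient_count_coprime big_ltn ?(ltnW n_gt1) //.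
rewrite coprimen0_gt1 // add0n /coprimes_below size_filter -sum1_count big_mkcond.
by rewrite /index_iota subn1; apply: eq_bigr => x _; rewrite coprime_sym.
Qed.

Lemma sum_coprimes_below n F : (1 < n)%N ->
  \sum_(x <- coprimes_below n) F x = sieve_sum n 1 (primes n) F.
Proof.
move=> n_gt1; rewrite /coprimes_below big_filter /sieve_sum divn1.
rewrite big_ltn_cond ?(ltnW n_gt1) // avoids_primes // coprime_sym coprimen0_gt1 //.
rewrite /index_iota subn1; apply: eq_big => x; first by rewrite avoids_primes.
by rewrite mul1n.
Qed.

Lemma totient_prod n : (1 < n)%N ->
  (totient n)%:R = n%:R * \prod_(p <- primes n) (1 - p%:R^-1) :> rat.
Proof.
move=> n_gt1; rewrite -size_coprimes_below // -sum1_size natr_sum.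
rewrite sum_coprimes_below // sieve_sum_oneE ?all_prime_primes ?primes_uniq //.
  by rewrite divr1.
by rewrite mul1n; exact: radical_dvdn.
Qed.

Lemma primes_neq_nil n : (1 < n)%N -> (primes n == [::]) = false.
Proof. by move=> n_gt1; rewrite primes_eq0 ltnNge n_gt1. Qed.

Lemma sum_coprimes_below_id n : (1 < n)%N ->
  \sum_(x <- coprimes_below n) x%:R =
  n%:R ^+ 2 / 2 * \prod_(p <- primes n) (1 - p%:R^-1) :> rat.
Proof.
move=> n_gt1; rewrite sum_coprimes_below // sieve_sum_natE ?all_prime_primes ?primes_uniq //.
  by rewrite primes_neq_nil // mulr0 subr0 mulr1.
by rewrite mul1n; exact: radical_dvdn.
Qed.

Lemma sum_coprimes_below_max n : (1 < n)%N ->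
  \sum_(x <- coprimes_below n) \sum_(y <- coprimes_below n) (maxn x y)%:R =
  2 / 3 * n%:R ^+ 3 * (\prod_(p <- primes n) (1 - p%:R^-1)) ^+ 2
  + n%:R / 6 * (-1) ^+ omega n * (radical n)%:R
      * (\prod_(p <- primes n) (1 - p%:R^-1)) ^+ 2
  - n%:R / 12 * 2 ^+ omega n * \prod_(p <- primes n) (1 - p%:R^-1) :> rat.
Proof.
move=> n_gt1.
rewrite (eq_bigr (fun x => sieve_sum n 1 (primes n) (fun y => (maxn x y)%:R))); last first.
  by move=> x _; rewrite sum_coprimes_below.
rewrite sum_coprimes_below // -/(sieve_summax n (primes n) 1 1).
have avoids1 : avoids (primes n) 1 by rewrite avoids_primes // coprime1n.
have dvd1 : (1 * 1 * 1 * \prod_(p <- primes n) p %| n)%N.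
  by rewrite !mul1n; exact: radical_dvdn.
have := sieve_summaxE n (primes n) 1 1 1 (all_prime_primes n) (primes_uniq n) avoids1 avoids1
  (coprime1n 1) (ltn0Sn 0) (ltn0Sn 0) (ltn0Sn 0) dvd1.
rewrite mul1n => ->; rewrite primes_neq_nil // -/(radical n) -/(omega n).
by rewrite /= mul0r subr0; field.
Qed.

Theorem theorem1 (n : nat) (hn : (1 < n)%N) :
  let m := radical n in
  let a := fun j : nat => nth 0%N (coprimes_below n) j.-1 in
  (\sum_(1 <= j < (totient n).+1) (j * a j)%N)%:R
  = (totient n)%:R / 24%:R *
    (8%:R * n%:R * (totient n)%:R + 6%:R * n%:R
     + 2%:R * (totient m)%:R * (-1) ^+ omega m - 2%:R ^+ omega m) :> rat.
Proof.
move=> m a; have n_gt0 := ltnW hn.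
rewrite /a -{1}(size_coprimes_below _ hn) sum_rank_mul_sorted ?coprimes_below_sorted //.
rewrite sum_coprimes_below_max // sum_coprimes_below_id //.
rewrite /m omega_radical // (totient_prod _ hn) (totient_prod _ (radical_gt1 _ hn)).
rewrite primes_radical //.
by field.
Qed.
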